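(* Let $\mathbb{K}$ be a field and $n\geq 2$. If $\mathbb{K}$ has characteristic not $2$, every range-compatible group homomorphism $F:\mathrm{S}_n(\mathbb{K})\to\mathbb{K}^n$ is local. If $\mathbb{K}$ has characteristic $2$, the range-compatible group homomorphisms $F:\mathrm{S}_n(\mathbb{K})\to\mathbb{K}^n$ are exactly the maps of the form $$M\longmapsto MX+\begin{bmatrix}\alpha(m_{1,1}) & \alpha(m_{2,2}) & \cdots & \alpha(m_{n,n})\end{bmatrix}^T$$ with $X\in\mathbb{K}^n$ and $\alpha$ a root-linear form on $\mathbb{K}$ (in particular every such map with $X=0$ is range-compatible). Moreover, if $\mathbb{K}$ has more than $2$ elements, every range-compatible linear map on $\mathrm{S}_n(\mathbb{K})$ is local.
   Context: $\mathrm{S}_n(\mathbb{K})$ is the space of $n\times n$ symmetric matrices over $\mathbb{K}$; $m_{i,j}$ is the $(i,j)$ entry of $M$. A map $F:\mathcal{S}\to\mathbb{K}^n$ on a set of $n\times p$ matrices is range-compatible when $F(M)\in\operatorname{im}M$ for all $M$, and local when there is $X\in\mathbb{K}^p$ with $F(M)=MX$ for all $M$. In characteristic $2$, a map $\alpha:\mathbb{K}\to\mathbb{K}$ is a root-linear form when it is additive and $\alpha(\lambda^2x)=\lambda\alpha(x)$ for all $\lambda,x\in\mathbb{K}$. *)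

From HB Require Import structures.
From mathcomp Require Import all_boot all_order all_algebra.
Set Implicit Arguments. Unset Strict Implicit. Unset Printing Implicit Defensive.
Import GRing.Theory.
Local Open Scope ring_scope.

(* Maps S_n(K) -> K^n are represented as functions 'M[K]_n -> 'cV[K]_n whose
   values outside S_n(K) are irrelevant: all hypotheses and conclusions below
   only mention symmetric arguments. *)
Definition symmetric_mx (K : fieldType) (n : nat) (M : 'M[K]_n) : Prop :=
  M^T = M.

Definition additive_on_sym (K : fieldType) (n : nat)
    (F : 'M[K]_n -> 'cV[K]_n) : Prop :=
  forall A B : 'M[K]_n, symmetric_mx A -> symmetric_mx B -> F (A + B) = F A + F B.

Definition linear_on_sym (K : fieldType) (n : nat)
    (F : 'M[K]_n -> 'cV[K]_n) : Prop :=
  additive_on_sym F /\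
  forall (a : K) (A : 'M[K]_n), symmetric_mx A -> F (a *: A) = a *: F A.

Definition range_compatible_sym (K : fieldType) (n : nat)
    (F : 'M[K]_n -> 'cV[K]_n) : Prop :=
  forall M : 'M[K]_n, symmetric_mx M -> exists Y : 'cV[K]_n, F M = M *m Y.

Definition local_sym (K : fieldType) (n : nat)
    (F : 'M[K]_n -> 'cV[K]_n) : Prop :=
  exists X : 'cV[K]_n, forall M : 'M[K]_n, symmetric_mx M -> F M = M *m X.

Definition root_linear (K : fieldType) (alpha : K -> K) : Prop :=
  (forall x y : K, alpha (x + y) = alpha x + alpha y) /\
  (forall lam x : K, alpha (lam ^+ 2 * x) = lam * alpha x).

From mathcomp Require Import all_boot all_order all_algebra.
From mathcomp Require Import ring.
Set Implicit Arguments. Unset Strict Implicit. Unset Printing Implicit Defensive.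
Import GRing.Theory.
Local Open Scope ring_scope.

(* S_n(K) is spanned additively by the matrices a E_ii and b (E_ij + E_ji),
   so an additive F on S_n(K) is determined by the coefficient maps
   fdiag i a = (F (a E_ii))_i and foff i j b = (F (b (E_ij + E_ji)))_i;
   range compatibility on rows of zeros shows that F of these generators has
   no other nonzero entries.  Range compatibility on the rank-one matrices
   lam (e_i + t e_j)(e_i + t e_j)^T gives one polynomial identity in t;
   polarizing it proves that foff i j is linear, and the remaining defect
   fdiag j mu - mu * foff i j 1 is symmetric in i, j and root-linear.  The
   matrix (e_i + e_j + e_k)(e_i + e_j + e_k)^T shows that foff i j 1 = x_j
   depends on j only.  Hence F agrees with M |-> M X + (alpha(m_ii))_i on
   the generators, thus everywhere.  Conversely, in characteristic 2 the
   vector (alpha(m_ii))_i is orthogonal to the kernel of M because the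
   quadratic form of M only sees its diagonal; outside characteristic 2, or
   when F is linear and |K| > 2, a root-linear alpha must vanish. *)

Lemma sum_split_diag (V : nmodType) (n : nat) (a : 'I_n -> 'I_n -> V) :
  \sum_(i < n) \sum_(j < n) a i j =
  \sum_(i < n) a i i + \sum_(i < n) \sum_(j < n | (i < j)%N) (a i j + a j i).
Proof.
have lower_upper (i : 'I_n) : \sum_(j < n) a i j =
    a i i + \sum_(j < n | (i < j)%N) a i j + \sum_(j < n | (j < i)%N) a i j.
  rewrite (bigD1 i) //= -addrA; congr (_ + _).
  rewrite (bigID (fun j : 'I_n => (i < j)%N)) /=; congr (_ + _); apply: eq_bigl => j.
    by rewrite andbC -val_eqE /=; case: ltngtP.
  by rewrite -leqNgt ltn_neqAle andbC eq_sym -val_eqE.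
rewrite (eq_bigr _ (fun i _ => lower_upper i)) !big_split /= -addrA; congr (_ + _).
rewrite [X in _ + X](exchange_big_dep xpredT) //= -big_split /=.
by apply: eq_bigr => i _; rewrite -big_split.
Qed.

Section SymmetricGenerators.
Variables (K : fieldType) (n : nat).
Implicit Types (M A B : 'M[K]_n) (u : 'cV[K]_n) (i j : 'I_n).

Definition symE i j : 'M[K]_n := delta_mx i j + delta_mx j i.

Lemma symmetric_mxP M : symmetric_mx M -> forall i j, M j i = M i j.
Proof. by move=> hM i j; rewrite -{1}hM mxE. Qed.

Lemma symmetric_mx0 : symmetric_mx (0 : 'M[K]_n).
Proof. exact: trmx0. Qed.

Lemma symmetric_mxD A B : symmetric_mx A -> symmetric_mx B -> symmetric_mx (A + B).
Proof. by rewrite /symmetric_mx linearD /= => -> ->. Qed.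

Lemma symmetric_mxZ (a : K) A : symmetric_mx A -> symmetric_mx (a *: A).
Proof. by rewrite /symmetric_mx linearZ /= => ->. Qed.

Lemma symmetric_mx_sum (I : Type) (r : seq I) (P : pred I) (A : I -> 'M[K]_n) :
  (forall k, P k -> symmetric_mx (A k)) -> symmetric_mx (\sum_(k <- r | P k) A k).
Proof.
move=> hA; elim/big_rec: _ => [|k S Pk hS]; first exact: symmetric_mx0.
exact: symmetric_mxD (hA k Pk) hS.
Qed.

Lemma symmetric_rank_one (a : K) u : symmetric_mx (a *: (u *m u^T)).
Proof. by apply: symmetric_mxZ; rewrite /symmetric_mx trmx_mul trmxK. Qed.

Lemma symmetric_delta (a : K) i : symmetric_mx (a *: delta_mx i i).
Proof. by apply: symmetric_mxZ; rewrite /symmetric_mx trmx_delta. Qed.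

Lemma symmetric_symE (b : K) i j : symmetric_mx (b *: symE i j).
Proof. by apply: symmetric_mxZ; rewrite /symmetric_mx linearD /= !trmx_delta addrC. Qed.

Lemma symEC i j : symE i j = symE j i.
Proof. exact: addrC. Qed.

Lemma sym_decomp M : symmetric_mx M ->
  M = \sum_(i < n) M i i *: delta_mx i i
      + \sum_(i < n) \sum_(j < n | (i < j)%N) M i j *: symE i j.
Proof.
move=> hM; rewrite {1}[M]matrix_sum_delta sum_split_diag; congr (_ + _).
apply: eq_bigr => i _; apply: eq_bigr => j _.
by rewrite (symmetric_mxP hM) scalerDr.
Qed.

End SymmetricGenerators.

Arguments symE {K n}.

Section AdditiveOnSym.
Variables (K : fieldType) (n : nat).

Lemma additive_on_sym0 (F : 'M[K]_n -> 'cV[K]_n) : additive_on_sym F -> F 0 = 0.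
Proof.
move=> hF; apply: (addrI (F 0)); rewrite -hF ?addr0 //; exact: symmetric_mx0.
Qed.

Lemma additive_on_sym_sum (F : 'M[K]_n -> 'cV[K]_n) (I : Type) (r : seq I)
    (P : pred I) (A : I -> 'M[K]_n) :
  additive_on_sym F -> (forall k, P k -> symmetric_mx (A k)) ->
  F (\sum_(k <- r | P k) A k) = \sum_(k <- r | P k) F (A k).
Proof.
move=> hF hA; elim: r => [|k r IH]; first by rewrite !big_nil additive_on_sym0.
rewrite !big_cons; case: ifP => // Pk.
by rewrite hF ?IH //; [exact: hA | exact: symmetric_mx_sum].
Qed.

Lemma additive_on_sym_ext (F G : 'M[K]_n -> 'cV[K]_n) :
  additive_on_sym F -> additive_on_sym G ->
  (forall (a : K) (i : 'I_n), F (a *: delta_mx i i) = G (a *: delta_mx i i)) ->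
  (forall (b : K) (i j : 'I_n), (i < j)%N -> F (b *: symE i j) = G (b *: symE i j)) ->
  forall M, symmetric_mx M -> F M = G M.
Proof.
move=> hF hG hdiag hoff M hM.
have sym_diag : symmetric_mx (\sum_(i < n) M i i *: delta_mx i i).
  by apply: symmetric_mx_sum => i _; exact: symmetric_delta.
have sym_row (i : 'I_n) :
    symmetric_mx (\sum_(j < n | (i < j)%N) M i j *: symE i j).
  by apply: symmetric_mx_sum => j _; exact: symmetric_symE.
have sym_off :
    symmetric_mx (\sum_(i < n) \sum_(j < n | (i < j)%N) M i j *: symE i j).
  by apply: symmetric_mx_sum => i _; exact: sym_row.
rewrite (sym_decomp hM) hF // hG // !additive_on_sym_sum //;
  try by move=> i _; first [exact: symmetric_delta | exact: sym_row].
congr (_ + _); first by apply: eq_bigr => i _; exact: hdiag.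
apply: eq_bigr => i _; rewrite !additive_on_sym_sum //;
  try by move=> j _; exact: symmetric_symE.
by apply: eq_bigr => j; exact: hoff.
Qed.

End AdditiveOnSym.

Lemma eq_lincomb3 (R : comRingType) (c1 c2 c3 a1 b1 a2 b2 a3 b3 x y : R) :
  a1 = b1 -> a2 = b2 -> a3 = b3 ->
  x - y = c1 * (a1 - b1) + c2 * (a2 - b2) + c3 * (a3 - b3) -> x = y.
Proof. by move=> -> -> -> /eqP; rewrite !subrr !mulr0 !addr0 subr_eq0 => /eqP. Qed.
Arguments eq_lincomb3 {R} c1 c2 c3 {a1 b1 a2 b2 a3 b3 x y}.

Section RangeCompatibleAdditive.
Variables (K : fieldType) (n : nat) (F : 'M[K]_n -> 'cV[K]_n).
Hypotheses (F_add : additive_on_sym F) (F_rc : range_compatible_sym F).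
Implicit Types (M : 'M[K]_n) (u : 'cV[K]_n) (i j p : 'I_n).

Lemma rc_zero_row M p : symmetric_mx M -> (forall q, M p q = 0) -> F M p 0 = 0.
Proof.
by move=> /F_rc [Y ->] hp; rewrite mxE big1 // => q _; rewrite hp mul0r.
Qed.

Lemma rc_rank_one (a : K) u : exists c, forall p, F (a *: (u *m u^T)) p 0 = u p 0 * c.
Proof.
have [Y ->] := F_rc (symmetric_rank_one a u).
exists (a * (u^T *m Y) 0 0) => p.
by rewrite -scalemxAl -mulmxA [LHS]mxE [X in _ * X]mxE big_ord1 mulrCA.
Qed.

Definition fdiag i (a : K) := F (a *: delta_mx i i) i 0.
Definition foff i j (b : K) := F (b *: symE i j) i 0.

Lemma F_deltaE (a : K) i p : F (a *: delta_mx i i) p 0 = if p == i then fdiag i a else 0.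
Proof.
have [->//|hpi] := eqVneq p i.
apply: rc_zero_row; first exact: symmetric_delta.
by move=> q; rewrite !mxE (negbTE hpi) mulr0.
Qed.

Lemma F_symEE (b : K) i j p : i != j ->
  F (b *: symE i j) p 0 =
  if p == i then foff i j b else if p == j then foff j i b else 0.
Proof.
move=> hij; have [->//|hpi] := eqVneq p i.
have [->|hpj] := eqVneq p j; first by rewrite /foff symEC.
apply: rc_zero_row; first exact: symmetric_symE.
by move=> q; rewrite !mxE (negbTE hpi) (negbTE hpj) addr0 mulr0.
Qed.

Lemma fdiagD i : {morph fdiag i : a b / a + b}.
Proof. by move=> a b; rewrite /fdiag scalerDl F_add ?mxE //; exact: symmetric_delta. Qed.

Lemma foffD i j : {morph foff i j : a b / a + b}.
Proof. by move=> a b; rewrite /foff scalerDl F_add ?mxE //; exact: symmetric_symE. Qed.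

(* Range compatibility on lam (e_i + t e_j)(e_i + t e_j)^T. *)
Lemma rank_one_relation i j (lam t : K) : i != j ->
  foff j i (lam * t) + fdiag j (lam * t ^+ 2) = t * (fdiag i lam + foff i j (lam * t)).
Proof.
move=> hij; pose u : 'cV[K]_n := delta_mx i 0 + t *: delta_mx j 0.
have u_expand : lam *: (u *m u^T) =
    lam *: delta_mx i i + (lam * t) *: symE i j + (lam * t ^+ 2) *: delta_mx j j.
  by apply/matrixP => p q; rewrite !mxE big_ord1 !mxE -!mulnb !natrM !eqxx /=; ring.
have [c hc] := rc_rank_one lam u.
have F_u p : F (lam *: (u *m u^T)) p 0 = F (lam *: delta_mx i i) p 0
    + F ((lam * t) *: symE i j) p 0 + F ((lam * t ^+ 2) *: delta_mx j j) p 0.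
  rewrite u_expand !F_add ?mxE //;
    by repeat first [apply: symmetric_mxD | apply: symmetric_delta | apply: symmetric_symE].
have := hc i; have := hc j.
rewrite !F_u !F_deltaE !F_symEE // !mxE !eqxx (negbTE hij) eq_sym (negbTE hij) /=.
rewrite !add0r !addr0 mulr0 addr0 !mulr1 mul1r => -> ->.
by rewrite mulrC.
Qed.

Lemma foff_polarized i j (lam t : K) : i != j ->
  fdiag j (lam * t) *+ 2 = t * foff i j lam + foff i j (lam * t).
Proof.
move=> hij; have e1 := rank_one_relation lam (t + 1) hij.
have e0 := rank_one_relation lam t hij.
have e2 := rank_one_relation lam 1 hij.
rewrite (_ : lam * (t + 1) ^+ 2 = lam * t ^+ 2 + lam * t + lam * t + lam) in e1;
  last by ring.
rewrite mulrDr mulr1 !fdiagD !foffD in e1.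
by apply: (eq_lincomb3 1 (-1) (-1) e1 e0 e2); rewrite expr1n !mulr1; ring.
Qed.

Lemma foff_linear i j (lam : K) : i != j -> foff i j lam = lam * foff i j 1.
Proof.
move=> hij; have := foff_polarized lam 1 hij; have := foff_polarized 1 lam hij.
by rewrite !mulr1 !mul1r => -> /addIr.
Qed.

(* The defect between the diagonal and the linear off-diagonal coefficients;
   it will turn out to be independent of i and j and root-linear. *)
Definition alpha_pair i j (mu : K) := fdiag j mu - mu * foff i j 1.

Lemma alpha_pair_relation i j (lam t : K) : i != j ->
  alpha_pair i j (lam * t ^+ 2) = t * alpha_pair j i lam.
Proof.
move=> hij; have hji : j != i by rewrite eq_sym.
move/(canRL (addKr _)): (rank_one_relation lam t hij) => e.
by rewrite /alpha_pair e (foff_linear (lam * t) hij) (foff_linear (lam * t) hji); ring.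
Qed.

Lemma alpha_pairC i j (mu : K) : i != j -> alpha_pair i j mu = alpha_pair j i mu.
Proof. by move=> hij; have := alpha_pair_relation mu 1 hij; rewrite expr1n !mulr1 mul1r. Qed.

(* Range compatibility on (e_i + e_j + e_k)(e_i + e_j + e_k)^T: the
   coefficient foff i j 1 does not depend on i. *)
Lemma foff_indep i j k : i != j -> i != k -> j != k -> foff i j 1 = foff k j 1.
Proof.
move=> hij hik hjk.
have [hji hki hkj] : [/\ j != i, k != i & k != j] by split; rewrite eq_sym.
pose u : 'cV[K]_n := delta_mx i 0 + delta_mx j 0 + delta_mx k 0.
have u_expand : 1 *: (u *m u^T) = 1 *: delta_mx i i + 1 *: delta_mx j j
    + 1 *: delta_mx k k + 1 *: symE i j + 1 *: symE i k + 1 *: symE j k.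
  by apply/matrixP => p q; rewrite !mxE big_ord1 !mxE -!mulnb !natrM !eqxx /=; ring.
have [c hc] := rc_rank_one 1 u.
have F_u p : F (1 *: (u *m u^T)) p 0 = F (1 *: delta_mx i i) p 0
    + F (1 *: delta_mx j j) p 0 + F (1 *: delta_mx k k) p 0
    + F (1 *: symE i j) p 0 + F (1 *: symE i k) p 0 + F (1 *: symE j k) p 0.
  rewrite u_expand !F_add ?mxE //;
    by repeat first [apply: symmetric_mxD | apply: symmetric_delta | apply: symmetric_symE].
have := hc i; have := hc k.
rewrite !F_u !F_deltaE !F_symEE // !mxE !eqxx.
rewrite ?(negbTE hij) ?(negbTE hik) ?(negbTE hjk) ?(negbTE hji) ?(negbTE hki) ?(negbTE hkj) /=.
rewrite !addr0 !add0r !mul1r => ek ei.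
have ea := alpha_pairC 1 hik; rewrite /alpha_pair !mul1r in ea.
by apply: (eq_lincomb3 1 (-1) 1 ei ek ea); ring.
Qed.

End RangeCompatibleAdditive.

Lemma delta_mulE (K : fieldType) (n : nat) (i j p : 'I_n) (X : 'cV[K]_n) :
  (delta_mx i j *m X) p 0 = (p == i)%:R * X j 0.
Proof.
rewrite mxE (bigD1 j) //= big1 ?addr0 => [|k /negbTE hk]; rewrite mxE ?hk ?eqxx.
  by rewrite andbT.
by rewrite andbF mul0r.
Qed.

Definition local_plus_diag (K : fieldType) (n : nat) (X : 'cV[K]_n) (alpha : K -> K)
    (M : 'M[K]_n) : 'cV[K]_n :=
  M *m X + \col_(i < n) alpha (M i i).

Lemma local_plus_diag_additive (K : fieldType) (n : nat) (X : 'cV[K]_n) (alpha : K -> K) :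
  {morph alpha : x y / x + y} -> additive_on_sym (local_plus_diag X alpha).
Proof.
move=> alphaD A B _ _; rewrite /local_plus_diag mulmxDl addrACA; congr (_ + _).
by apply/matrixP => i j; rewrite !mxE alphaD.
Qed.

Lemma local_plus_diag_deltaE (K : fieldType) (n : nat) (X : 'cV[K]_n) (alpha : K -> K)
    (a : K) (i p : 'I_n) : alpha 0 = 0 ->
  local_plus_diag X alpha (a *: delta_mx i i) p 0 =
  if p == i then a * X i 0 + alpha a else 0.
Proof.
move=> alpha0; rewrite /local_plus_diag -scalemxAl [LHS]mxE [X in X + _]mxE delta_mulE !mxE.
by case: eqP => _; rewrite ?mul1r ?mulr1 ?mul0r ?mulr0 ?alpha0 ?addr0.
Qed.

Lemma local_plus_diag_symEE (K : fieldType) (n : nat) (X : 'cV[K]_n) (alpha : K -> K)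
    (b : K) (i j p : 'I_n) : alpha 0 = 0 -> i != j ->
  local_plus_diag X alpha (b *: symE i j) p 0 =
  if p == i then b * X j 0 else if p == j then b * X i 0 else 0.
Proof.
move=> alpha0 hij; rewrite /local_plus_diag -scalemxAl mulmxDl [LHS]mxE [X in X + _]mxE.
rewrite [X in _ * X + _]mxE !delta_mulE !mxE.
case: (eqVneq p i) => [->|_].
  by rewrite (negbTE hij) /= !addr0 mulr0 alpha0 addr0 mul1r mul0r addr0.
by case: (eqVneq p j) => _ /=; rewrite !mul0r ?add0r ?mul1r ?addr0 mulr0 alpha0 addr0.
Qed.

Section AdditiveRangeCompatibleForm.
Variables (K : fieldType) (m : nat) (F : 'M[K]_m.+2 -> 'cV[K]_m.+2).
Hypotheses (F_add : additive_on_sym F) (F_rc : range_compatible_sym F).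
Local Notation n := m.+2.

Definition partner (j : 'I_n) : 'I_n := if j == 0 then ord_max else 0.

Lemma partner_neq (j : 'I_n) : partner j != j.
Proof. by rewrite /partner; case: (eqVneq j 0) => [->|]; rewrite // eq_sym. Qed.

Definition xcoef (j : 'I_n) : K := foff F (partner j) j 1.
Definition alpha (mu : K) : K := fdiag F 0 mu - mu * xcoef 0.

Lemma foff_xcoef (i j : 'I_n) : i != j -> foff F i j 1 = xcoef j.
Proof.
move=> hij; have [->//|hip] := eqVneq i (partner j).
by apply: foff_indep => //; rewrite eq_sym partner_neq.
Qed.

Lemma fdiagE (j : 'I_n) (mu : K) : fdiag F j mu = mu * xcoef j + alpha mu.
Proof.
rewrite /alpha; have [->|hj0] := eqVneq j 0; first by rewrite addrC subrK.
have := alpha_pairC F_add F_rc mu hj0.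
by rewrite /alpha_pair !foff_xcoef // 1?eq_sym // => ->; rewrite addrC subrK.
Qed.

Lemma alpha_pairE (i j : 'I_n) (mu : K) : i != j -> alpha_pair F i j mu = alpha mu.
Proof. by move=> hij; rewrite /alpha_pair fdiagE foff_xcoef // addrC addKr. Qed.

Lemma alpha_root_linear : root_linear alpha.
Proof.
split=> [x y|lam x]; first by rewrite /alpha fdiagD //; ring.
have h0 : (ord_max : 'I_n) != 0 by [].
by rewrite mulrC -(alpha_pairE _ h0) alpha_pair_relation // alpha_pairE // eq_sym.
Qed.

Lemma rc_additive_form :
  forall M, symmetric_mx M -> F M = local_plus_diag (\col_j xcoef j) alpha M.
Proof.
have alpha0 : alpha 0 = 0 by rewrite /alpha mul0r subr0 /fdiag scale0r additive_on_sym0 // mxE.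
apply: additive_on_sym_ext => //.
- by apply: local_plus_diag_additive; case: alpha_root_linear.
- move=> a i; apply/matrixP => p q; rewrite (ord1 q) F_deltaE // local_plus_diag_deltaE //.
  by rewrite mxE fdiagE.
- move=> b i j lt_ij; have hij : i != j by rewrite neq_ltn lt_ij.
  have hji : j != i by rewrite eq_sym.
  apply/matrixP => p q; rewrite (ord1 q) F_symEE // local_plus_diag_symEE // !mxE.
  by rewrite (foff_linear F_add F_rc b hij) (foff_linear F_add F_rc b hji) !foff_xcoef.
Qed.

End AdditiveRangeCompatibleForm.

Section RootLinear.
Variables (K : fieldType) (alpha : K -> K).
Hypothesis alpha_rl : root_linear alpha.

Lemma root_linear0 : alpha 0 = 0.
Proof. by case: alpha_rl => alphaD _; apply: (addrI (alpha 0)); rewrite -alphaD !addr0. Qed.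

(* Outside characteristic 2, lam = -1 gives alpha x = - alpha x. *)
Lemma root_linear_char_neq2 : ~~ (2%N \in [pchar K]) -> forall x, alpha x = 0.
Proof.
move=> hch x; case: alpha_rl => _ alphaM.
have two_neq0 : (2%:R : K) != 0 by apply: contra hch => h; rewrite inE h.
have := alphaM (-1) x; rewrite sqrrN expr1n mul1r mulN1r => /eqP.
rewrite -addr_eq0 -mulr2n -mulr_natr mulf_eq0 (negbTE two_neq0) orbF.
exact/eqP.
Qed.

Lemma root_linear_homogeneous (lam : K) : lam != 0 -> lam != 1 ->
  (forall x, alpha x = x * alpha 1) -> forall x, alpha x = 0.
Proof.
move=> lam_neq0 lam_neq1 alpha_hom; case: alpha_rl => _ alphaM.
have : lam * (lam - 1) * alpha 1 = 0.
  by have := alphaM lam 1; rewrite mulr1 alpha_hom => e; rewrite mulrBr mulr1 mulrBl -expr2 e subrr.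
move/eqP; rewrite !mulf_eq0 (negbTE lam_neq0) subr_eq0 (negbTE lam_neq1) /= => /eqP a1.
by move=> x; rewrite alpha_hom a1 mulr0.
Qed.

End RootLinear.

Lemma quad_form_char2 (K : fieldType) (n : nat) (M : 'M[K]_n) (y : 'I_n -> K) :
  2%N \in [pchar K] -> symmetric_mx M ->
  \sum_(i < n) \sum_(k < n) y i * M i k * y k = \sum_(i < n) y i ^+ 2 * M i i.
Proof.
move=> hch hM; rewrite sum_split_diag [X in _ + X]big1 ?addr0 => [|i _].
  by apply: eq_bigr => i _; rewrite expr2; ring.
apply: big1 => k _; rewrite (symmetric_mxP hM).
have -> : y k * M k i * y i = y i * M k i * y k by ring.
by rewrite -mulr2n -mulr_natr (pcharf0 hch) mulr0.
Qed.

(* In characteristic 2, (alpha(m_11), ..., alpha(m_nn))^T lies in the range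
   of M: it is orthogonal to the kernel of M^T = M. *)
Lemma diag_in_range (K : fieldType) (n : nat) (alpha : K -> K) (M : 'M[K]_n) :
  2%N \in [pchar K] -> root_linear alpha -> symmetric_mx M ->
  exists Z, \col_(i < n) alpha (M i i) = M *m Z.
Proof.
move=> hch alpha_rl hM; have [alphaD alphaM] := alpha_rl.
set d := \col_(i < n) alpha (M i i).
suff /submxP [D dD] : (d^T <= M)%MS by exists D^T; rewrite -[d]trmxK dD trmx_mul hM.
rewrite submxE; apply/eqP/matrixP => r q; rewrite (ord1 r) [RHS]mxE mxE.
set C := cokermx M.
have MC0 i : \sum_(k < n) M i k * C k q = 0.
  by have /matrixP/(_ i q) := mulmx_coker M; rewrite !mxE.
rewrite (eq_bigr (fun j => alpha (C j q ^+ 2 * M j j))) => [|j _]; last first.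
  by rewrite !mxE alphaM mulrC.
rewrite -(big_morph alpha alphaD (root_linear0 alpha_rl)).
rewrite -(quad_form_char2 (fun i => C i q) hch hM) big1 ?root_linear0 // => i _.
by under eq_bigr do rewrite -mulrA; rewrite -mulr_sumr MC0 mulr0.
Qed.

Lemma local_of_trivial_diag (K : fieldType) (n : nat) (F : 'M[K]_n -> 'cV[K]_n)
    (X : 'cV[K]_n) (alpha : K -> K) :
  (forall M, symmetric_mx M -> F M = local_plus_diag X alpha M) ->
  (forall x, alpha x = 0) -> local_sym F.
Proof.
move=> hF alpha0; exists X => M hM; rewrite hF // /local_plus_diag.
by rewrite [X in _ + X](_ : _ = 0) ?addr0 //; apply/matrixP => i j; rewrite !mxE alpha0.
Qed.

Lemma linear_form_alpha_hom (K : fieldType) (n : nat) (F : 'M[K]_n.+1 -> 'cV[K]_n.+1)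
    (X : 'cV[K]_n.+1) (alpha : K -> K) :
  root_linear alpha -> linear_on_sym F ->
  (forall M, symmetric_mx M -> F M = local_plus_diag X alpha M) ->
  forall x, alpha x = x * alpha 1.
Proof.
move=> alpha_rl [_ F_lin] hF x.
have alpha0 := root_linear0 alpha_rl.
have /matrixP/(_ 0 0) := F_lin x _ (symmetric_delta 1 (0 : 'I_n.+1)).
rewrite scalerA mulr1 [RHS]mxE !hF; try exact: symmetric_delta.
rewrite !local_plus_diag_deltaE //=.
by rewrite mul1r mulrDr => /addrI.
Qed.

Lemma exists_nonbinary (K : fieldType) (a b c : K) :
  [/\ a != b, a != c & b != c] -> exists lam : K, lam != 0 /\ lam != 1.
Proof.
case=> hab hac hbc.
have : ~~ all (mem [:: 0; 1]) [:: a; b; c].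
  apply/negP => /allP abc_sub.
  have abc_uniq : uniq [:: a; b; c] by rewrite /= !inE negb_or hab hac hbc.
  by have := uniq_leq_size abc_uniq abc_sub.
by case/allPn => lam _; rewrite !inE negb_or => /andP[??]; exists lam.
Qed.

Theorem theorem1p10 (K : fieldType) (n : nat) (hn : (2 <= n)%N) :
  (~~ (2%N \in [pchar K]) ->
     forall F : 'M[K]_n -> 'cV[K]_n,
       additive_on_sym F -> range_compatible_sym F -> local_sym F)
  /\
  ((2%N \in [pchar K]) ->
     forall F : 'M[K]_n -> 'cV[K]_n,
       (additive_on_sym F /\ range_compatible_sym F) <->
       (exists (X : 'cV[K]_n) (alpha : K -> K),
          root_linear alpha /\
          forall M : 'M[K]_n, symmetric_mx M ->
            F M = M *m X + \col_(i < n) alpha (M i i)))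
  /\
  ((exists a b c : K, [/\ a != b, a != c & b != c]) ->
     forall F : 'M[K]_n -> 'cV[K]_n,
       linear_on_sym F -> range_compatible_sym F -> local_sym F).
Proof.
case: n hn => [|[|m]] // _; split; [|split].
- move=> hch F F_add F_rc; apply: (local_of_trivial_diag (rc_additive_form F_add F_rc)).
  exact: root_linear_char_neq2 (alpha_root_linear F_add F_rc) hch.
- move=> hch F; split=> [[F_add F_rc]|[X [alpha [alpha_rl hF]]]].
    exists (\col_j xcoef F j), (alpha F); split; first exact: alpha_root_linear.
    exact: rc_additive_form.
  split=> [A B hA hB|M hM].
    rewrite !hF //; last exact: symmetric_mxD.
    exact: (local_plus_diag_additive X alpha_rl.1 hA hB).
  have [Z dZ] := diag_in_range hch alpha_rl hM.
  by exists (X + Z); rewrite hF // dZ mulmxDr.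
- case=> a [b [c /exists_nonbinary [lam [lam_neq0 lam_neq1]]]] F F_lin F_rc.
  have F_add := F_lin.1; have hF := rc_additive_form F_add F_rc.
  apply: (local_of_trivial_diag hF).
  have alpha_rl := alpha_root_linear F_add F_rc.
  apply: (root_linear_homogeneous alpha_rl lam_neq0 lam_neq1).
  exact: (linear_form_alpha_hom alpha_rl F_lin hF).
Qed.
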